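(* Let $(X_t)_{t\in\mathbb N_0}$ be real random variables adapted to a filtration $(\mathcal F_t)_{t\in\mathbb N_0}$ with $X_0=x_0$ deterministic, let $\tau^*$ be a stopping time, let $I^-<I^+$ be reals, and define $\tau^+=\inf\{t\ge0:X_t\ge I^+\}$, $\tau^-=\inf\{t\ge0:X_t\le I^-\}$. For a stopping time $\tau$ and parameters $D,s\ge0$, $R\in\mathbb R$, say that the drift conditions hold if for every $t\ge1$: (C1) $\mathbf 1_{\{\tau>t-1\}}\big(X_{t-1}+R-\mathbb E[X_t\mid\mathcal F_{t-1}]\big)\le0$ almost surely, and (C2) conditioned on $\mathcal F_{t-1}$, the random variable $\mathbf 1_{\{\tau>t-1\}}(X_{t-1}+R-X_t)$ satisfies the one-sided $(D,s)$-Bernstein condition. Let $\epsilon>0$. (1) Suppose the drift conditions hold with $R<0$ and $\tau=\tau^*$, and $x_0>I^-$. Then for every positive integer $T\le\frac{(1-\epsilon)(x_0-I^-)}{-R}$, $$\Pr[\tau^-\le\min\{T,\tau^*\}]\le\exp\Big(-\frac{\epsilon^2(x_0-I^-)^2/2}{sT+\epsilon(x_0-I^-)D/3}\Big).$$ (2) Suppose the drift conditions hold with $R>0$ and $\tau=\min\{\tau^+,\tau^-,\tau^*\}$, and $I^-<x_0<I^+$. Then for every positive integer $T\ge\frac{(1+\epsilon)(I^+-x_0)}{R}$, both $\Pr[\tau^+>T\text{ and }\tau^*>T]$ and $\Pr[\tau^+>\tau^-\text{ and }\tau^*>T]$ are at most $$\exp\Big(-\frac{(x_0-I^-)^2/2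}{sT+(x_0-I^-)D/3}\Big)+\exp\Big(-\frac{\epsilon^2(I^+-x_0)^2/2}{sT+\epsilon(I^+-x_0)D/3}\Big).$$
   Context: One-sided Bernstein condition: for $D,s\ge0$, a random variable $Z$ satisfies the one-sided $(D,s)$-Bernstein condition if $\mathbb E[e^{\lambda Z}]\le\exp\!\big(\frac{\lambda^2 s/2}{1-\lambda D/3}\big)$ for all $\lambda\ge0$ with $\lambda D<3$; ''conditioned on $\mathcal F_{t-1}$'' means this holds almost surely with $\mathbb E[\,\cdot\mid\mathcal F_{t-1}]$ in place of $\mathbb E$. Infima of empty sets are $+\infty$. *)

From HB Require Import structures.
From mathcomp Require Import all_boot all_order all_algebra.
From mathcomp Require Import all_classical all_reals all_analysis.
From mathcomp Require Import measurable_realfun.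
Set Implicit Arguments. Unset Strict Implicit. Unset Printing Implicit Defensive.
Import Order.TTheory GRing.Theory Num.Theory.
Local Open Scope classical_set_scope.
Local Open Scope ring_scope.

Section Defs.
Context {d : measure_display} {T : measurableType d} {R : realType}.
Variable P : probability T R.

Definition filtration (F : nat -> set (set T)) :=
  forall t, [/\ sigma_algebra setT (F t), F t `<=` measurable
              & F t `<=` F t.+1].

Definition G_measurable (G : set (set T)) (f : T -> R) :=
  forall B : set R, measurable B -> G (f @^-1` B).
Definition G_measurable_ext (G : set (set T)) (f : T -> \bar R) :=
  forall B : set (\bar R), measurable B -> G (f @^-1` B).

Definition adapted (F : nat -> set (set T)) (X : nat -> T -> R) :=
  forall t, G_measurable (F t) (X t).

Definition stopping_time (F : nat -> set (set T)) (tau : T -> \bar R) :=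
  (forall w, tau w = +oo%E \/ exists n : nat, tau w = (n%:R)%:E) /\
  forall t : nat, F t [set w | (tau w <= (t%:R)%:E)%E].

(** first hitting times (inf of empty set = +oo) *)
Definition hit_above (X : nat -> T -> R) (I : R) : T -> \bar R :=
  fun w => ereal_inf [set (t%:R)%:E | t in [set t : nat | I <= X t w]].
Definition hit_below (X : nat -> T -> R) (I : R) : T -> \bar R :=
  fun w => ereal_inf [set (t%:R)%:E | t in [set t : nat | X t w <= I]].

Definition cond_exp_version (G : set (set T)) (Y Z : T -> R) :=
  [/\ P.-integrable setT (EFin \o Y), G_measurable G Z,
      P.-integrable setT (EFin \o Z) &
      forall A, G A ->
        (\int[P]_(x in A) (Z x)%:E = \int[P]_(x in A) (Y x)%:E)%E].

Definition cond_exp_version_nneg (G : set (set T)) (Y W : T -> \bar R) :=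
  [/\ measurable_fun setT Y, (forall x, 0 <= Y x)%E,
      G_measurable_ext G W, (forall x, 0 <= W x)%E &
      forall A, G A -> (\int[P]_(x in A) W x = \int[P]_(x in A) Y x)%E].

Definition cond_bernstein (G : set (set T)) (Dp s : R) (Z : T -> R) :=
  forall lam : R, 0 <= lam -> lam * Dp < 3 ->
    exists W, cond_exp_version_nneg G (fun x => (expR (lam * Z x))%:E) W /\
      {ae P, forall x, (W x <= (expR ((lam ^+ 2 * s / 2) / (1 - lam * Dp / 3)))%:E)%E}.

(** drift conditions (C1),(C2) for stopping time tau, parameters D, s, Rd;
    index t here stands for the paper's t-1 (so t+1 >= 1) *)
Definition drift_conditions (F : nat -> set (set T)) (X : nat -> T -> R)
    (tau : T -> \bar R) (Dp s Rd : R) :=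
  forall t : nat,
    (exists Z, cond_exp_version (F t) (X t.+1) Z /\
      {ae P, forall x, (if ((t%:R)%:E < tau x)%E then 1 else 0)
                         * (X t x + Rd - Z x) <= 0}) /\
    cond_bernstein (F t) Dp s
      (fun x => (if ((t%:R)%:E < tau x)%E then 1 else 0)
                  * (X t x + Rd - X t.+1 x)).

End Defs.

From HB Require Import structures.
From mathcomp Require Import all_boot all_order all_algebra.
From mathcomp Require Import all_classical all_reals all_analysis.
From mathcomp Require Import measurable_realfun.
From mathcomp Require Import finmap.
From mathcomp Require Import ring lra.
Import Order.TTheory GRing.Theory Num.Theory.
Set Implicit Arguments. Unset Strict Implicit. Unset Printing Implicit Defensive.
Local Open Scope classical_set_scope.
Local Open Scope ring_scope.

(* Write Z_t for the stopped increment 1{t < tau} (X_t + R - X_{t+1}).  The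
   Bernstein condition bounds E[exp(lam Z_t) | F_t] by exp(q lam), so for
   events B_t in F_t, peeling off one conditional expectation at a time gives
   E exp(lam sum_{t<n} 1_{B_t} Z_t) <= exp(n q lam); Chernoff's bound at the
   optimal lam turns this into a Bernstein tail bound for such sums.  Only the
   Bernstein condition (C2) is used, never (C1).
   On the events of the theorem the relevant sum telescopes to x0 - X_k + k R:
   in part (1), with k the first time X drops below Im, it is at least
   eps (x0 - Im); in part (2) it is at least x0 - Im if X drops below Im by
   time T, and at least eps (Ip - x0) if X stays in ]Im, Ip[ up to T.  A union
   bound over these two sums finishes. *)

Section G_measurable.
Context {d : measure_display} {T : measurableType d} {R : realType}.
Variable G : set (set T).

Lemma G_measurable_mono (G' : set (set T)) (f : T -> R) :
  G `<=` G' -> G_measurable G f -> G_measurable G' f.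
Proof. by move=> GG' Gf B mB; exact/GG'/Gf. Qed.

Lemma G_measurable_comp (f : T -> R) (g : R -> R) :
  G_measurable G f -> measurable_fun setT g -> G_measurable G (g \o f).
Proof.
move=> Gf mg B mB; rewrite comp_preimage; apply: Gf.
by have := mg measurableT B mB; rewrite setTI.
Qed.

Lemma G_measurable_fun (f : T -> R) :
  G `<=` measurable -> G_measurable G f -> measurable_fun setT f.
Proof. by move=> GM Gf _ B mB; rewrite setTI; exact/GM/Gf. Qed.

Lemma G_measurable_ext_fun (f : T -> \bar R) :
  G `<=` measurable -> G_measurable_ext G f -> measurable_fun setT f.
Proof. by move=> GM Gf _ B mB; rewrite setTI; exact/GM/Gf. Qed.

Hypothesis sG : sigma_algebra setT G.

Lemma g_sigma_measurable (A : set (g_sigma_algebraType G)) : measurable A -> G A.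
Proof. by move=> mA; rewrite -(sigma_algebra_id sG); exact: mA. Qed.

Lemma G_measurableP (f : T -> R) :
  G_measurable G f <-> measurable_fun (setT : set (g_sigma_algebraType G)) f.
Proof.
split=> [Gf _ B mB|mf B mB].
  by rewrite setTI; apply: sub_sigma_algebra; exact: Gf.
by apply: g_sigma_measurable; have := mf measurableT B mB; rewrite setTI.
Qed.

Lemma G_measurableI (A B : set T) : G A -> G B -> G (A `&` B).
Proof.
by move=> GA GB; apply: g_sigma_measurable; apply: measurableI;
  exact: sub_sigma_algebra.
Qed.

Lemma G_measurable_cst (r : R) : G_measurable G (fun=> r).
Proof. exact/G_measurableP/measurable_cst. Qed.

Lemma G_measurable_indic (B : set T) : G B -> G_measurable G (\1_B : T -> R).
Proof.
move=> GB; apply/G_measurableP.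
by apply: (@measurable_indic _ (g_sigma_algebraType G)); exact: sub_sigma_algebra.
Qed.

Lemma G_measurableD (f g : T -> R) : G_measurable G f -> G_measurable G g ->
  G_measurable G (fun x => f x + g x).
Proof.
by move=> /G_measurableP mf /G_measurableP mg; exact/G_measurableP/measurable_funD.
Qed.

Lemma G_measurableB (f g : T -> R) : G_measurable G f -> G_measurable G g ->
  G_measurable G (fun x => f x - g x).
Proof.
by move=> /G_measurableP mf /G_measurableP mg; exact/G_measurableP/measurable_funB.
Qed.

Lemma G_measurableM (f g : T -> R) : G_measurable G f -> G_measurable G g ->
  G_measurable G (fun x => f x * g x).
Proof.
by move=> /G_measurableP mf /G_measurableP mg; exact/G_measurableP/measurable_funM.
Qed.

End G_measurable.

Lemma measurable_ler {d : measure_display} {T : measurableType d} {R : realType}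
    (f g : T -> R) : measurable_fun setT f -> measurable_fun setT g ->
  measurable [set x | f x <= g x].
Proof.
(* every subset of bool is measurable *)
move=> mf mg; have := measurable_fun_ler mf mg measurableT (Y := [set true]) I.
by rewrite setTI; congr measurable; apply/seteqP; split => x /= /eqP.
Qed.

Lemma nondecreasing_cvge_mule (R : realType) (u : nat -> R) (l : R) (y : \bar R) :
  (forall n, 0 <= u n) -> nondecreasing_seq u ->
  (EFin \o u) @ \oo --> l%:E -> (0 <= y)%E ->
  (fun n => (u n)%:E * y)%E @ \oo --> (l%:E * y)%E.
Proof.
move=> u0 ndu cu y0.
have ul n : u n <= l.
  have : ((u n)%:E <= limn (EFin \o u))%E.
    apply: lime_ge; first by apply/cvg_ex; exists l%:E.
    by near=> m; rewrite /= lee_fin; apply: ndu; near: m; exists n.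
  by rewrite (cvg_lim _ cu)// lee_fin.
case: y y0 => [r r0|_|//]; first exact: cvgeZr.
have [[N uN]|u_le0] := pselect (exists N, 0 < u N).
  have l0 : 0 < l by apply: lt_le_trans uN (ul N).
  rewrite gt0_muley ?lte_fin//; apply: cvg_near_cst; near=> n.
  rewrite gt0_muley// lte_fin; apply: lt_le_trans uN _; apply: ndu.
  by near: n; exists N.
have u_eq0 n : u n = 0.
  by apply/eqP; rewrite eq_le u0 andbT leNgt; apply/negP => ?; apply: u_le0; exists n.
have -> : l = 0.
  have : limn (EFin \o u) = 0%E.
    by apply/cvg_lim => //; apply: cvg_near_cst; near=> n; rewrite /= u_eq0.
  by rewrite (cvg_lim _ cu)// => -[].
by rewrite mul0e; apply: cvg_near_cst; near=> n; rewrite u_eq0 mul0e.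
Unshelve. all: by end_near.
Qed.

Section integral_cond_exp.
Context {d : measure_display} {T : measurableType d} {R : realType}.
Variables (P : probability T R) (G : set (set T)).
Hypotheses (sG : sigma_algebra setT G) (GM : G `<=` measurable).
Local Open Scope ereal_scope.

Lemma g_sigma_measurable_fun (f : g_sigma_algebraType G -> R) :
  measurable_fun setT f -> measurable_fun (setT : set T) f.
Proof.
move=> mf _ B mB; rewrite setTI; apply/GM/(g_sigma_measurable sG).
by have := mf measurableT B mB; rewrite setTI.
Qed.

Import HBNNSimple.

Lemma integral_nnsfun_mule (phi : {nnsfun g_sigma_algebraType G >-> R})
    (V : T -> \bar R) :
  measurable_fun setT V -> (forall x, 0 <= V x) ->
  \int[P]_x ((phi x)%:E * V x) =
  \sum_(i < #|` fset_set (phi @` setT)|)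
     ((fset_set (phi @` setT))`_i)%:E *
      \int[P]_(x in phi @^-1` [set (fset_set (phi @` setT))`_i]) V x.
Proof.
move=> mV V0; set s := fset_set (phi @` setT).
have s0 (i : 'I_#|` s|) : (0 <= s`_i)%R.
  have : s`_i \in s by apply: mem_nth.
  rewrite in_fset_set ?in_setE; last exact: fimfunP.
  by move=> -[x _ <-]; exact: fun_ge0.
have mA (i : 'I_#|` s|) : measurable (phi @^-1` [set s`_i] : set T).
  apply/GM/(g_sigma_measurable sG).
  exact: (measurable_sfunP phi (measurable_set1 s`_i)).
transitivity (\int[P]_x (\sum_(i < #|` s|)
    ((s`_i * \1_(phi @^-1` [set s`_i]) x)%:E * V x))).
  apply: eq_integral => x _.
  rewrite (fimfunEord phi x) -/s -sumEFin ge0_sume_distrl// => i _.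
  by rewrite lee_fin mulr_ge0.
rewrite ge0_integral_sum//; last 2 first.
- by move=> i; apply: emeasurable_funM => //; exact/measurable_EFinP/measurable_funM.
- by move=> i x _; rewrite mule_ge0// lee_fin mulr_ge0.
apply: eq_bigr => i _.
rewrite [in RHS]integral_mkcond epatch_indic.
under eq_integral do rewrite EFinM -muleA.
rewrite ge0_integralZl_EFin//; last 2 first.
- by move=> x _; rewrite mule_ge0// lee_fin.
- by apply: emeasurable_funM => //; exact/measurable_EFinP/measurable_indic.
by congr (_ * _); apply: eq_integral => x _ /=; rewrite muleC.
Qed.

(* Taking out what is known: first for simple weights, then by monotone
   convergence. *)
Lemma integral_mule_cond_exp_nneg (Y W : T -> \bar R) (h : T -> R) :
  cond_exp_version_nneg P G Y W -> (forall x, (0 <= h x)%R) -> G_measurable G h ->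
  \int[P]_x ((h x)%:E * Y x) = \int[P]_x ((h x)%:E * W x).
Proof.
move=> [mY Y0 GW W0 eqYW] h0 Gh.
have mW := G_measurable_ext_fun GM GW.
have mh : measurable_fun (setT : set (g_sigma_algebraType G)) (EFin \o h).
  exact/measurable_EFinP/(G_measurableP sG).
pose phi := nnsfun_approx measurableT mh.
have ndphi x : nondecreasing_seq (fun n => phi n x).
  by move=> m n mn; have /lefP := nd_nnsfun_approx measurableT mh mn; apply.
have lim_phi V : measurable_fun setT V -> (forall x, 0 <= V x) ->
    \int[P]_x ((h x)%:E * V x) = limn (fun n => \int[P]_x ((phi n x)%:E * V x)).
  move=> mV V0; rewrite -monotone_convergence//; last 3 first.
  - move=> n; apply: emeasurable_funM => //.
    exact/measurable_EFinP/g_sigma_measurable_fun.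
  - by move=> n x _; rewrite mule_ge0// lee_fin.
  - by move=> x _ m n mn; rewrite lee_wpmul2r// lee_fin; exact: (ndphi x m n mn).
  apply: eq_integral => x _; apply/esym/cvg_lim => //.
  apply: nondecreasing_cvge_mule => //.
  by apply: cvg_nnsfun_approx => // ? _; rewrite /= lee_fin.
rewrite (lim_phi Y)// (lim_phi W)//; congr (limn _); apply/funext => n.
rewrite integral_nnsfun_mule// integral_nnsfun_mule//.
apply: eq_bigr => i _; congr (_ * _); rewrite eqYW//.
apply: (g_sigma_measurable sG); exact: measurable_sfunP.
Qed.

End integral_cond_exp.

Section conditional_mgf.
Context {d : measure_display} {T : measurableType d} {R : realType}.
Variable P : probability T R.
Local Open Scope ereal_scope.

Lemma cond_mgf_indic_le (G : set (set T)) (Z : T -> R) (lam c : R) W (B : set T)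
    (h : T -> R) :
  sigma_algebra setT G -> G `<=` measurable ->
  cond_exp_version_nneg P G (fun x => (expR (lam * Z x))%:E) W ->
  {ae P, forall x, W x <= c%:E} -> (1 <= c)%R -> G B ->
  (forall x, 0 <= h x)%R -> G_measurable G h ->
  \int[P]_x (h x * expR (lam * (\1_B x * Z x)))%:E <= c%:E * \int[P]_x (h x)%:E.
Proof.
move=> sG GM condW Wle c1 GB h0 Gh.
have [mY _ GW W0 _] := condW.
have mW := G_measurable_ext_fun GM GW.
have mh := G_measurable_fun GM Gh.
have GhB : G_measurable G (fun x => h x * \1_B x)%R.
  by apply: G_measurableM => //; exact: G_measurable_indic.
have mhB := G_measurable_fun GM GhB.
have mhBc : measurable_fun setT (fun x => h x * (1 - \1_B x))%R.
  apply: measurable_funM => //; apply: measurable_funB => //.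
  exact/measurable_indic/GM.
have hB0 x : (0 <= h x * \1_B x)%R by rewrite mulr_ge0.
have hBc0 x : (0 <= h x * (1 - \1_B x))%R.
  by rewrite mulr_ge0// indicE; case: (_ \in _); rewrite ?subrr ?subr0.
have -> : \int[P]_x (h x * expR (lam * (\1_B x * Z x)))%:E =
    \int[P]_x ((h x * \1_B x)%:E * (expR (lam * Z x))%:E + (h x * (1 - \1_B x))%:E).
  apply: eq_integral => x _; rewrite indicE.
  case: (x \in B); rewrite ?(mul1r, mul0r, mulr0, mulr1, subrr, subr0, expR0).
    by rewrite EFinM adde0.
  by rewrite mul0e add0e.
rewrite ge0_integralD//; last 4 first.
- by move=> x _; rewrite mule_ge0// lee_fin.
- by apply: emeasurable_funM => //; exact/measurable_EFinP.
- by move=> x _; rewrite lee_fin.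
- exact/measurable_EFinP.
rewrite (integral_mule_cond_exp_nneg sG GM condW hB0 GhB).
rewrite -ge0_integralD//; last 4 first.
- by move=> x _; rewrite mule_ge0// lee_fin.
- by apply: emeasurable_funM => //; exact/measurable_EFinP.
- by move=> x _; rewrite lee_fin.
- exact/measurable_EFinP.
rewrite -(ge0_integralZl_EFin _ _ (f1 := fun x => (h x)%:E)) ?(le_trans _ c1)//;
  last 2 first.
- by move=> x _; rewrite lee_fin.
- exact/measurable_EFinP.
apply: ae_ge0_le_integral => //.
- by move=> x _; rewrite adde_ge0// ?mule_ge0// lee_fin.
- apply: emeasurable_funD; last exact/measurable_EFinP.
  by apply: emeasurable_funM => //; exact/measurable_EFinP.
- by move=> x _; rewrite mule_ge0// lee_fin ?(le_trans _ c1).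
- by apply: emeasurable_funM => //; exact/measurable_EFinP.
apply: filterS Wle => x Wx _; rewrite indicE.
case: (x \in B); rewrite ?(mulr1, mulr0, subrr, subr0, mul0e, add0e, adde0).
  by rewrite [c%:E * _]muleC lee_wpmul2l// lee_fin.
by rewrite -EFinM lee_fin ler_peMl.
Qed.

Lemma filtration_mono (F : nat -> set (set T)) : filtration F ->
  {homo F : s t / (s <= t)%N >-> s `<=` t}.
Proof.
move=> hF s t /subnK <-; elim: (t - s)%N => [//|n IH].
by apply: subset_trans IH _; have [] := hF (n + s)%N.
Qed.

Lemma adapted_indic_sum (F : nat -> set (set T)) (Z : nat -> T -> R)
    (B : nat -> set T) : filtration F ->
  (forall t, F t (B t)) -> (forall t, G_measurable (F t.+1) (Z t)) ->
  forall n, G_measurable (F n) (fun x => \sum_(0 <= t < n) \1_(B t) x * Z t x)%R.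
Proof.
move=> hF hB hZ; elim=> [|n IH].
  have [sG _ _] := hF 0%N.
  under eq_fun do rewrite big_geq//.
  exact: G_measurable_cst.
have [sG _ FF] := hF n.
have [sG' _ _] := hF n.+1.
under eq_fun do rewrite big_nat_recr//=.
apply: G_measurableD => //; first exact: G_measurable_mono IH.
by apply: G_measurableM => //; apply: G_measurable_indic => //; apply: FF.
Qed.

Lemma mgf_indic_sum_le (F : nat -> set (set T)) (Z : nat -> T -> R)
    (B : nat -> set T) (lam c : R) : filtration F -> (1 <= c)%R ->
  (forall t, exists W, cond_exp_version_nneg P (F t)
      (fun x => (expR (lam * Z t x))%:E) W /\ {ae P, forall x, W x <= c%:E}) ->
  (forall t, F t (B t)) -> (forall t, G_measurable (F t.+1) (Z t)) ->
  forall n, \int[P]_x (expR (lam * \sum_(0 <= t < n) \1_(B t) x * Z t x))%:E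
            <= (c ^+ n)%:E.
Proof.
move=> hF c1 hW hB hZ; elim=> [|n IH].
  under eq_integral do rewrite big_geq// mulr0 expR0.
  by rewrite integral_cst// mul1e probability_le1.
have [sG GM _] := hF n; have [W [condW Wle]] := hW n.
under eq_integral do rewrite big_nat_recr//= mulrDr expRD.
pose S x := expR (lam * \sum_(0 <= t < n) \1_(B t) x * Z t x).
have S0 x : (0 <= S x)%R by exact: expR_ge0.
have GS : G_measurable (F n) S.
  apply: (G_measurable_comp (g := fun y => expR (lam * y))
    (adapted_indic_sum hF hB hZ n)).
  by apply: measurableT_comp => //; exact: measurable_funM.
apply: le_trans (cond_mgf_indic_le sG GM condW Wle c1 (hB n) S0 GS) _.
by rewrite exprS EFinM lee_wpmul2l// lee_fin (le_trans _ c1).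
Qed.

Lemma chernoff_ge0 (S : T -> R) (lam a : R) : measurable_fun setT S ->
  (0 <= lam)%R ->
  P [set x | (a <= S x)%R] <=
    (expR (- lam * a))%:E * \int[P]_x (expR (lam * S x))%:E.
Proof.
move=> mS lam0.
have mA : measurable [set x | (a <= S x)%R].
  have := mS measurableT _ (measurable_itv `[a, +oo[); rewrite setTI.
  by congr measurable; apply/seteqP; split => x /=; rewrite in_itv /= andbT.
rewrite -[X in P X]setIT -integral_indic// -ge0_integralZl_EFin//; last first.
  by apply/measurable_EFinP; apply: measurableT_comp => //; exact: measurable_funM.
apply: ge0_le_integral => //.
- exact/measurable_EFinP/measurable_indic.
- apply: emeasurable_funM => //; apply/measurable_EFinP.
  by apply: measurableT_comp => //; exact: measurable_funM.
move=> x _; rewrite -EFinM lee_fin indicE.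
case: (boolP (x \in _)) => [/set_mem /= aS|_]; last by rewrite mulr_ge0 ?expR_ge0.
rewrite -expRD; apply: le_trans (expR_ge1Dx _).
by rewrite lerDl mulNr addrC -mulrBr mulr_ge0// subr_ge0.
Qed.

End conditional_mgf.

(* Take lam = a / (s n + a D / 3) if s > 0 and lam = 3 / (2 D) if s = 0 < D;
   if s = D = 0 the right-hand side is 0 (x / 0 = 0) and lam = 0 works. *)
Lemma bernstein_lambda_opt (R : realType) (a s D n : R) :
  0 < a -> 0 <= s -> 0 <= D -> 0 < n ->
  exists lam, [/\ 0 <= lam, lam * D < 3 &
   - lam * a + n * ((lam ^+ 2 * s / 2) / (1 - lam * D / 3))
     <= - ((a ^+ 2 / 2) / (s * n + a * D / 3))].
Proof.
move=> a0 s0 D0 n0.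
have [s_gt0|] := ltP 0 s.
  have sn0 : 0 < s * n by rewrite mulr_gt0.
  have aD0 : 0 <= a * D by rewrite mulr_ge0// ltW.
  set Q := s * n + a * D / 3.
  have Q0 : 0 < Q by rewrite /Q ltr_pwDl// divr_ge0.
  exists (a / Q); split; first by rewrite divr_ge0// ltW.
    rewrite mulrAC ltr_pdivrMr// /Q mulrDr [X in _ < _ + X]mulrC divfK//.
    by rewrite ltrDr mulr_gt0.
  have -> : 1 - a / Q * D / 3 = s * n / Q by rewrite /Q; field; apply/eqP; lra.
  rewrite le_eqVlt; apply/orP; left; apply/eqP.
  by rewrite /Q; field; rewrite (gt_eqF n0) (gt_eqF s_gt0) andbT; apply/eqP; lra.
rewrite le_eqVlt => /orP[/eqP s_eq0|]; last by rewrite ltNge s0.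
rewrite s_eq0; have [D_gt0|] := ltP 0 D.
  exists (3 / (2 * D)); split; first by rewrite divr_ge0// mulr_ge0// ltW.
    have -> : 3 / (2 * D) * D = 3 / 2 by field; rewrite gt_eqF.
    lra.
  rewrite !(mulr0, mul0r, add0r) le_eqVlt; apply/orP; left; apply/eqP.
  by field; rewrite !gt_eqF.
rewrite le_eqVlt => /orP[/eqP D_eq0|]; last by rewrite ltNge D0.
exists 0; split => //; first by rewrite D_eq0 mulr0.
by rewrite D_eq0 !(mulr0, mul0r, add0r, oppr0, subr0, invr0, expr0n).
Qed.

Section bernstein_tail.
Context {d : measure_display} {T : measurableType d} {R : realType}.
Variable P : probability T R.

Lemma bernstein_indic_sum_tail (F : nat -> set (set T)) (Z : nat -> T -> R)
    (B : nat -> set T) (Dp s a : R) (n : nat) : filtration F ->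
  (forall t, F t (B t)) -> (forall t, G_measurable (F t.+1) (Z t)) ->
  (forall t, cond_bernstein P (F t) Dp s (Z t)) ->
  0 <= Dp -> 0 <= s -> 0 < a -> (0 < n)%N ->
  (P [set x | (a <= \sum_(0 <= t < n) \1_(B t) x * Z t x)%R] <=
    (expR (- ((a ^+ 2 / 2) / (s * n%:R + a * Dp / 3))))%:E)%E.
Proof.
move=> hF hB hZ hBern Dp0 s0 a0 n0.
have n_gt0 : 0 < n%:R :> R by rewrite ltr0n.
have [lam [lam0 lamD lam_opt]] := bernstein_lambda_opt a0 s0 Dp0 n_gt0.
set q := (lam ^+ 2 * s / 2) / (1 - lam * Dp / 3) in lam_opt.
have q0 : 0 <= q by rewrite divr_ge0 ?divr_ge0 ?mulr_ge0 ?sqr_ge0//; lra.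
have c1 : 1 <= expR q by rewrite (le_trans _ (expR_ge1Dx q))// lerDl.
have [_ GMn _] := hF n.
have mS := G_measurable_fun GMn (adapted_indic_sum hF hB hZ n).
apply: le_trans (chernoff_ge0 P a mS lam0) _.
apply: le_trans.
  apply: lee_wpmul2l; first by rewrite lee_fin expR_ge0.
  apply: (mgf_indic_sum_le hF c1) => // t.
  by have [W [condW Wle]] := hBern t lam lam0 lamD; exists W.
by rewrite -EFinM lee_fin -expRM_natl -expRD ler_expR.
Qed.

End bernstein_tail.

Section first_hit.
Context {R : realType}.
Local Open Scope ereal_scope.

Definition first_hit (p : nat -> Prop) : \bar R :=
  ereal_inf [set (t%:R)%:E | t in [set t | p t]].

Lemma first_hit_le (p : nat -> Prop) (n : nat) :
  first_hit p <= (n%:R)%:E <-> exists2 k, (k <= n)%N & p k.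
Proof.
split=> [hit_le|[k kn pk]]; last first.
  by apply: ge_ereal_inf; exists (k%:R)%:E; [exists k | rewrite lee_fin ler_nat].
apply: contrapT => no_hit.
have : ((n.+1)%:R)%:E <= first_hit p.
  apply: le_ereal_inf_tmp => _ [t pt <-]; rewrite lee_fin ler_nat ltnNge.
  by apply/negP => tn; apply: no_hit; exists t.
by move=> /le_trans /(_ hit_le); rewrite lee_fin ler_nat ltnn.
Qed.

Lemma first_hit_gt (p : nat -> Prop) (n : nat) :
  (n%:R)%:E < first_hit p <-> forall k, (k <= n)%N -> ~ p k.
Proof.
rewrite ltNge; split=> [/negP no_hit k kn pk|no_hit].
  by apply: no_hit; apply/first_hit_le; exists k.
by apply/negP => /first_hit_le [k kn]; exact: no_hit.
Qed.

Lemma first_hitP (p : nat -> Prop) (k : nat) : p k ->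
  exists j, [/\ (j <= k)%N, p j, (forall i, (i < j)%N -> ~ p i)
    & first_hit p = (j%:R)%:E].
Proof.
move=> pk; have /ex_minnP[j /asboolP pj j_min] : exists k, `[< p k >].
  by exists k; exact/asboolP.
have j_first i : (i < j)%N -> ~ p i.
  by move=> ij pi; have := j_min i (asboolT pi); rewrite leqNgt ij.
exists j; split => //; first exact/j_min/asboolT.
apply/le_anti/andP; split; first by apply/first_hit_le; exists j.
apply: le_ereal_inf_tmp => _ [t pt <-]; rewrite lee_fin ler_nat leqNgt.
by apply/negP => tj; exact: j_first tj pt.
Qed.

Lemma first_hit_oo (p : nat -> Prop) : (forall j, ~ p j) -> first_hit p = +oo.
Proof.
move=> no_hit; rewrite /first_hit (_ : [set _ | _ in _] = set0) ?ereal_inf0//.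
by apply/seteqP; split => // x [t pt _]; exact: no_hit pt.
Qed.

End first_hit.

Section hitting_time.
Context {d : measure_display} {T : measurableType d} {R : realType}.
Variables (X : nat -> T -> R) (I : R).

Lemma hit_belowE w : hit_below X I w = first_hit (fun t => X t w <= I).
Proof. by []. Qed.

Lemma hit_belowP w (k : nat) : X k w <= I ->
  exists j, [/\ (j <= k)%N, X j w <= I, (forall i, (i < j)%N -> I < X i w)
    & hit_below X I w = (j%:R)%:E].
Proof.
move=> Xk; rewrite hit_belowE.
have [j [jk Xj j_first ->]] := first_hitP (R := R) (p := fun t => X t w <= I) Xk.
by exists j; split => // i ij; rewrite ltNge; apply/negP; exact: j_first.
Qed.

Local Open Scope ereal_scope.

Lemma hit_below_le_minE (tau : T -> \bar R) (n : nat) :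
  [set x | hit_below X I x <= Order.min (n%:R)%:E (tau x)] =
  \bigcup_(k in [set k | (k <= n)%N])
    ([set x | (X k x <= I)%R] `&` [set x | (k%:R)%:E <= tau x]).
Proof.
apply/seteqP; split => x /=.
  rewrite le_min => /andP[+ hit_tau]; rewrite hit_belowE => /first_hit_le[k kn Xk].
  have [j [jk Xj _ hit_j]] := hit_belowP Xk.
  by exists j; [exact: leq_trans kn | rewrite -hit_j].
move=> [k kn [Xk k_tau]].
have hit_k : hit_below X I x <= (k%:R)%:E.
  by rewrite hit_belowE; apply/first_hit_le; exists k.
by rewrite le_min (le_trans hit_k) ?lee_fin ?ler_nat// (le_trans hit_k).
Qed.

Lemma hit_below_ltE (tau : T -> \bar R) :
  [set x | hit_below X I x < tau x] =
  \bigcup_k ([set x | (X k x <= I)%R] `&` [set x | (k%:R)%:E < tau x]).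
Proof.
apply/seteqP; split => x /=.
  have [[k Xk] hit_tau|no_hit] := pselect (exists k, (X k x <= I)%R).
    by have [j [_ Xj _ hit_j]] := hit_belowP Xk; exists j => //; rewrite -hit_j.
  rewrite hit_belowE first_hit_oo ?ltNge ?leey// => k Xk.
  by apply: no_hit; exists k.
move=> [k _ [Xk k_tau]]; apply: le_lt_trans k_tau.
by rewrite hit_belowE; apply/first_hit_le; exists k.
Qed.

End hitting_time.

Section stopping_time.
Context {d : measure_display} {T : measurableType d} {R : realType}.
Variables (F : nat -> set (set T)) (tau : T -> \bar R).
Hypotheses (hF : filtration F) (htau : stopping_time F tau).
Local Open Scope ereal_scope.

Lemma stopping_time_gt (t : nat) : F t [set x | (t%:R)%:E < tau x].
Proof.
have [[_ FC _] _ _] := hF t; have [_ Ftau] := htau.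
rewrite (_ : [set x | _] = setT `\` [set x | tau x <= (t%:R)%:E]); first exact/FC/Ftau.
apply/seteqP; split => x /=; first by rewrite ltNge => /negP.
by move=> [_ /negP]; rewrite ltNge.
Qed.

Lemma measurable_stopping_time_ge (k : nat) :
  measurable [set x | (k%:R)%:E <= tau x].
Proof.
have tau_nat x : tau x = +oo \/ exists n : nat, tau x = (n%:R)%:E by case: htau.
case: k => [|k].
  rewrite (_ : [set x | _] = setT) //; apply/seteqP; split => // x _ /=.
  by case: (tau_nat x) => [->|[n ->]]; rewrite ?leey// lee_fin.
rewrite (_ : [set x | _] = [set x | (k%:R)%:E < tau x]).
  by have [_ GM _] := hF k; exact/GM/stopping_time_gt.
apply/seteqP; split => x /=; case: (tau_nat x) => [->|[n ->]];
  by rewrite ?ltey ?leey// lee_fin lte_fin ler_nat ltr_nat.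
Qed.

End stopping_time.

Section drift.
Context {d : measure_display} {T : measurableType d} {R : realType}.
Variables (P : probability T R) (F : nat -> set (set T)) (X : nat -> T -> R)
  (x0 : R).
Hypotheses (hF : filtration F) (hX : adapted F X) (hX0 : forall w, X 0%N w = x0).

Lemma measurable_X (t : nat) : measurable_fun setT (X t).
Proof. by have [_ GM _] := hF t; exact: G_measurable_fun (hX t). Qed.

Lemma adapted_path_in (t : nat) (U : set R) : measurable U ->
  F t [set x | forall j, (j <= t)%N -> U (X j x)].
Proof.
move=> mU; have [sG _ _] := hF t.
rewrite (_ : [set x | _] = \bigcap_(j in [set j | (j <= t)%N]) (X j @^-1` U)).
  apply: (g_sigma_measurable sG); apply: bigcap_measurableType => j jt.
  have /(G_measurableP sG) := G_measurable_mono (filtration_mono hF jt) (hX j).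
  by move=> /(_ measurableT _ mU); rewrite setTI.
by apply/seteqP; split => x /= Ux j; [move=> jt; exact: Ux | exact: Ux].
Qed.

Lemma hit_above_gt (I : R) (t : nat) : F t [set x | ((t%:R)%:E < hit_above X I x)%E].
Proof.
have := adapted_path_in t (measurable_itv `]-oo, I[).
congr (F t _); apply/seteqP; split => x /= h.
  apply/first_hit_gt => j jt; have := h j jt; rewrite /= in_itv /=.
  by rewrite ltNge => /negP.
move/first_hit_gt: h => h j jt; rewrite /= in_itv /= ltNge.
by apply/negP; exact: h.
Qed.

Lemma hit_below_gt (I : R) (t : nat) : F t [set x | ((t%:R)%:E < hit_below X I x)%E].
Proof.
have := adapted_path_in t (measurable_itv `]I, +oo[).
congr (F t _); apply/seteqP; split => x /= h.
  apply/first_hit_gt => j jt; have := h j jt; rewrite /= in_itv /= andbT.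
  by rewrite ltNge => /negP.
move/first_hit_gt: h => h j jt; rewrite /= in_itv /= andbT ltNge.
by apply/negP; exact: h.
Qed.

Definition drift_increment (tau : T -> \bar R) (Rd : R) (t : nat) (x : T) : R :=
  (if ((t%:R)%:E < tau x)%E then 1 else 0) * (X t x + Rd - X t.+1 x).

Lemma drift_increment_adapted (tau : T -> \bar R) (Rd : R) (t : nat) :
  (forall t : nat, F t [set x | ((t%:R)%:E < tau x)%E]) ->
  G_measurable (F t.+1) (drift_increment tau Rd t).
Proof.
move=> htau; have [sG _ _] := hF t.+1; have [_ _ FF] := hF t.
have -> : drift_increment tau Rd t =
    (fun x => \1_[set x | ((t%:R)%:E < tau x)%E] x * (X t x + Rd - X t.+1 x)).
  apply/funext => x; rewrite /drift_increment indicE.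
  by case: ifP => h; [rewrite mem_set | rewrite memNset //= h].
apply: (G_measurableM sG); first by apply: (G_measurable_indic sG); apply: FF.
apply: (G_measurableB sG); last exact: hX.
apply: (G_measurableD sG); first exact: G_measurable_mono (hX t).
exact: G_measurable_cst.
Qed.

Lemma drift_sum_telescope (tau : T -> \bar R) (Rd : R) (B : nat -> set T)
    (n k : nat) (x : T) : (k <= n)%N ->
  (forall t, (t < k)%N -> B t x /\ ((t%:R)%:E < tau x)%E) ->
  (forall t, (k <= t < n)%N -> ~ B t x) ->
  \sum_(0 <= t < n) \1_(B t) x * drift_increment tau Rd t x = x0 - X k x + k%:R * Rd.
Proof.
move=> kn before after.
rewrite (big_cat_nat (leq0n k) kn) /= [X in _ + X]big_nat_cond [X in _ + X]big1.
  rewrite addr0 big_nat_cond (eq_bigr (fun t => Rd - (X t.+1 x - X t x))).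
    rewrite -big_nat_cond big_split /= sumrN telescope_sumr// hX0.
    by rewrite sumr_const_nat subn0 -mulr_natl; ring.
  move=> t /andP[/andP[_ tk] _]; have [Bt t_tau] := before t tk.
  by rewrite indicE mem_set// mul1r /drift_increment t_tau mul1r; ring.
by move=> t /andP[ktn _]; rewrite indicE memNset ?mul0r//; exact: after.
Qed.

Variables (taus : T -> \bar R) (Im Ip : R).
Hypothesis hst : stopping_time F taus.

Let not_below (t : nat) := [set x | ((t%:R)%:E < hit_below X Im x)%E].

Lemma lower_crossing_sum_ge (Rd eps : R) (Tn k : nat) (x : T) : Rd < 0 ->
  Tn%:R <= (1 - eps) * (x0 - Im) / (- Rd) ->
  (k <= Tn)%N -> X k x <= Im -> ((k%:R)%:E <= taus x)%E ->
  eps * (x0 - Im) <=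
    \sum_(0 <= t < Tn) \1_(not_below t) x * drift_increment taus Rd t x.
Proof.
move=> Rd0 hT kTn Xk k_tau.
have [j [jk Xj _ hit_j]] := hit_belowP Xk.
rewrite (drift_sum_telescope _ (leq_trans jk kTn)); last 2 first.
- move=> t tj; split; first by rewrite /not_below /= hit_j lte_fin ltr_nat.
  by apply: lt_le_trans k_tau; rewrite lte_fin ltr_nat (leq_trans tj).
- by move=> t /andP[jt _]; rewrite /not_below /= hit_j lte_fin ltr_nat ltnNge jt.
have : Tn%:R * Rd <= j%:R * Rd.
  by apply: ler_wnM2r; [exact: ltW | rewrite ler_nat (leq_trans jk)].
have : Tn%:R * - Rd <= (1 - eps) * (x0 - Im) by rewrite -ler_pdivlMr ?oppr_gt0.
lra.
Qed.

Lemma lower_crossing_bound (eps Dp s Rd : R) (Tn : nat) :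
  0 < eps -> 0 <= Dp -> 0 <= s -> Rd < 0 ->
  drift_conditions P F X taus Dp s Rd -> Im < x0 -> (0 < Tn)%N ->
  Tn%:R <= (1 - eps) * (x0 - Im) / (- Rd) ->
  (P [set w | (hit_below X Im w <= Order.min (Tn%:R)%:E (taus w))%E]
    <= (expR (- ((eps ^+ 2 * (x0 - Im) ^+ 2 / 2)
                / (s * Tn%:R + eps * (x0 - Im) * Dp / 3))))%:E)%E.
Proof.
move=> eps0 Dp0 s0 Rd0 hdr Imx0 Tn0 hT.
have a0 : 0 < eps * (x0 - Im) by rewrite mulr_gt0// subr_gt0.
have hZ t := drift_increment_adapted Rd t (stopping_time_gt hF hst).
have [_ GMT _] := hF Tn.
have mS := G_measurable_fun GMT (adapted_indic_sum hF (hit_below_gt Im) hZ Tn).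
rewrite -exprMn; apply: le_trans _ (bernstein_indic_sum_tail hF (hit_below_gt Im)
  hZ (fun t => (hdr t).2) Dp0 s0 a0 Tn0).
rewrite hit_below_le_minE; apply: le_measure; rewrite ?in_setE.
- apply: bigcup_measurable => k _; apply: measurableI.
    exact: measurable_ler (measurable_X k) (measurable_cst _).
  exact: measurable_stopping_time_ge hF hst k.
- exact: measurable_ler (measurable_cst _) mS.
by move=> x [k kTn [Xk k_tau]]; exact: (lower_crossing_sum_ge Rd0 hT kTn Xk k_tau).
Qed.

Definition exit_time (x : T) : \bar R :=
  Order.min (hit_above X Ip x) (Order.min (hit_below X Im x) (taus x)).

Lemma exit_time_gt (t : nat) : F t [set x | ((t%:R)%:E < exit_time x)%E].
Proof.
have [sG _ _] := hF t.
rewrite (_ : [set x | _] = [set x | ((t%:R)%:E < hit_above X Ip x)%E] `&`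
    ([set x | ((t%:R)%:E < hit_below X Im x)%E] `&` [set x | ((t%:R)%:E < taus x)%E])).
  apply: (G_measurableI sG); first exact: hit_above_gt.
  by apply: (G_measurableI sG); [exact: hit_below_gt | exact: stopping_time_gt].
apply/seteqP; split => x /=; rewrite /exit_time !lt_min.
  by move=> /andP[-> /andP[-> ->]].
by move=> [-> [-> ->]].
Qed.

(* Either X drops below Im by time Tn, before reaching Ip, or it stays in
   ]Im, Ip[ up to Tn, where the positive drift has moved the sum past
   eps (Ip - x0). *)
Lemma exit_sums_ge (Rd eps : R) (Tn : nat) (x : T) : 0 < Rd ->
  (1 + eps) * (Ip - x0) / Rd <= Tn%:R -> ((Tn%:R)%:E < taus x)%E ->
  (Order.min (Tn%:R)%:E (hit_below X Im x) < hit_above X Ip x)%E ->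
  x0 - Im <= \sum_(0 <= t < Tn) \1_(not_below t) x * drift_increment exit_time Rd t x
  \/ eps * (Ip - x0) <=
       \sum_(0 <= t < Tn) \1_setT x * drift_increment exit_time Rd t x.
Proof.
move=> Rd0 hT Tn_taus.
have [[k kTn Xk]|stays_above] := pselect (exists2 k, (k <= Tn)%N & X k x <= Im).
  have [j [jk Xj _ hit_j]] := hit_belowP Xk; have jTn := leq_trans jk kTn.
  rewrite hit_j min_r ?lee_fin ?ler_nat// => j_above; left.
  rewrite (drift_sum_telescope _ jTn); last 2 first.
  - move=> t tj; have ltj : ((t%:R : R)%:E < (j%:R)%:E)%E by rewrite lte_fin ltr_nat.
    split; first by rewrite /not_below /= hit_j.
    rewrite /exit_time !lt_min hit_j ltj (lt_trans ltj j_above) /=.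
    by apply: lt_trans Tn_taus; rewrite lte_fin ltr_nat (leq_trans tj).
  - by move=> t /andP[jt _]; rewrite /not_below /= hit_j lte_fin ltr_nat ltnNge jt.
  have : 0 <= j%:R * Rd by rewrite mulr_ge0// ltW.
  lra.
have Tn_below : ((Tn%:R)%:E < hit_below X Im x)%E.
  apply/first_hit_gt => j jTn Xj; exact: stays_above (ex_intro2 _ _ j jTn Xj).
rewrite (min_l (ltW Tn_below)) => Tn_above; right.
rewrite (drift_sum_telescope _ (leqnn Tn)); last 2 first.
- move=> t tTn; have ltT : ((t%:R : R)%:E < (Tn%:R)%:E)%E by rewrite lte_fin ltr_nat.
  split=> //; rewrite /exit_time !lt_min.
  by rewrite (lt_trans ltT Tn_above) (lt_trans ltT Tn_below) (lt_trans ltT Tn_taus).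
- by move=> t /andP[Tnt tTn]; move: (leq_ltn_trans Tnt tTn); rewrite ltnn.
have XTn : X Tn x < Ip.
  move/first_hit_gt: Tn_above => /(_ Tn (leqnn Tn)).
  by rewrite ltNge => /negP.
have : (1 + eps) * (Ip - x0) <= Tn%:R * Rd by rewrite -ler_pdivrMr.
lra.
Qed.

Lemma upper_crossing_bound (eps Dp s Rd : R) (Tn : nat) :
  0 < eps -> 0 <= Dp -> 0 <= s -> 0 < Rd ->
  drift_conditions P F X exit_time Dp s Rd -> Im < x0 -> x0 < Ip -> (0 < Tn)%N ->
  (1 + eps) * (Ip - x0) / Rd <= Tn%:R ->
  let bound := expR (- (((x0 - Im) ^+ 2 / 2) / (s * Tn%:R + (x0 - Im) * Dp / 3)))
             + expR (- ((eps ^+ 2 * (Ip - x0) ^+ 2 / 2)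
                         / (s * Tn%:R + eps * (Ip - x0) * Dp / 3))) in
  (P [set w | ((Tn%:R)%:E < hit_above X Ip w)%E /\ ((Tn%:R)%:E < taus w)%E]
     <= bound%:E)%E /\
  (P [set w | (hit_below X Im w < hit_above X Ip w)%E /\ ((Tn%:R)%:E < taus w)%E]
     <= bound%:E)%E.
Proof.
move=> eps0 Dp0 s0 Rd0 hdr Imx0 x0Ip Tn0 hT bound.
have a1 : 0 < x0 - Im by rewrite subr_gt0.
have a2 : 0 < eps * (Ip - x0) by rewrite mulr_gt0// subr_gt0.
have hZ t := drift_increment_adapted Rd t exit_time_gt.
have FT t : F t setT by have [[F0 FC _] _ _] := hF t; rewrite -(setD0 setT); exact: FC.
have [_ GMT _] := hF Tn.
pose S1 := [set x | x0 - Im <=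
  \sum_(0 <= t < Tn) \1_(not_below t) x * drift_increment exit_time Rd t x].
pose S2 := [set x | eps * (Ip - x0) <=
  \sum_(0 <= t < Tn) \1_setT x * drift_increment exit_time Rd t x].
have mS1 : measurable S1.
  apply: measurable_ler (measurable_cst _) _.
  exact: G_measurable_fun GMT (adapted_indic_sum hF (hit_below_gt Im) hZ Tn).
have mS2 : measurable S2.
  apply: measurable_ler (measurable_cst _) _.
  exact: G_measurable_fun GMT (adapted_indic_sum hF FT hZ Tn).
have PS1 := bernstein_indic_sum_tail hF (hit_below_gt Im) hZ (fun t => (hdr t).2)
  Dp0 s0 a1 Tn0.
have PS2 := bernstein_indic_sum_tail hF FT hZ (fun t => (hdr t).2) Dp0 s0 a2 Tn0.
rewrite exprMn in PS2.
have union_bound (E : set T) : measurable E ->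
    (forall x, E x -> ((Tn%:R)%:E < taus x)%E /\
       (Order.min (Tn%:R)%:E (hit_below X Im x) < hit_above X Ip x)%E) ->
    (P E <= bound%:E)%E.
  move=> mE E_exit; have ES : E `<=` S1 `|` S2.
    by move=> x /E_exit[Tn_taus exit]; exact: exit_sums_ge Rd0 hT Tn_taus exit.
  apply: le_trans (le_measure _ _ _ ES) _; rewrite ?in_setE//; first exact: measurableU.
  by apply: le_trans (measureU2 _ mS1 mS2) _; rewrite EFinD leeD.
split; apply: union_bound.
- by apply: measurableI; apply: GMT; [exact: hit_above_gt | exact: stopping_time_gt].
- by move=> x [Tn_above Tn_taus]; rewrite gt_min Tn_above.
- rewrite (_ : [set w | _] = [set w | (hit_below X Im w < hit_above X Ip w)%E] `&`
    [set w | ((Tn%:R)%:E < taus w)%E]) //; apply: measurableI.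
    rewrite hit_below_ltE; apply: bigcup_measurable => k _; apply: measurableI.
      exact: measurable_ler (measurable_X k) (measurable_cst _).
    by have [_ GMk _] := hF k; exact/GMk/hit_above_gt.
  by apply: GMT; exact: stopping_time_gt.
- by move=> x [below_above Tn_taus]; rewrite gt_min below_above orbT.
Qed.
End drift.

Theorem mainTheorem19 (d : measure_display) (T : measurableType d)
  (R : realType) (P : probability T R) (F : nat -> set (set T))
  (X : nat -> T -> R) (x0 : R) (taus : T -> \bar R) (Im Ip eps : R) :
  filtration F -> adapted F X -> (forall w, X 0%N w = x0) ->
  stopping_time F taus -> Im < Ip -> 0 < eps ->
  (forall Dp s Rd : R, 0 <= Dp -> 0 <= s -> Rd < 0 ->
    drift_conditions P F X taus Dp s Rd -> Im < x0 ->
    forall Tn : nat, (0 < Tn)%N ->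
      Tn%:R <= (1 - eps) * (x0 - Im) / (- Rd) ->
      (P [set w | (hit_below X Im w <= Order.min (Tn%:R)%:E (taus w))%E]
        <= (expR (- ((eps ^+ 2 * (x0 - Im) ^+ 2 / 2)
                    / (s * Tn%:R + eps * (x0 - Im) * Dp / 3))))%:E)%E) /\
  (forall Dp s Rd : R, 0 <= Dp -> 0 <= s -> 0 < Rd ->
    drift_conditions P F X
      (fun w => Order.min (hit_above X Ip w)
                  (Order.min (hit_below X Im w) (taus w))) Dp s Rd ->
    Im < x0 -> x0 < Ip ->
    forall Tn : nat, (0 < Tn)%N ->
      (1 + eps) * (Ip - x0) / Rd <= Tn%:R ->
      let bound := expR (- (((x0 - Im) ^+ 2 / 2)
                             / (s * Tn%:R + (x0 - Im) * Dp / 3)))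
                 + expR (- ((eps ^+ 2 * (Ip - x0) ^+ 2 / 2)
                             / (s * Tn%:R + eps * (Ip - x0) * Dp / 3))) in
      (P [set w | ((Tn%:R)%:E < hit_above X Ip w)%E /\ ((Tn%:R)%:E < taus w)%E]
         <= bound%:E)%E /\
      (P [set w | (hit_below X Im w < hit_above X Ip w)%E /\ ((Tn%:R)%:E < taus w)%E]
         <= bound%:E)%E).
Proof.
(* Im < Ip is only needed through Im < x0 < Ip, assumed in part (2). *)
move=> hF hX hX0 hst _ eps0; split.
  move=> Dp s Rd Dp0 s0 Rd0 hdr Imx0 Tn Tn0 hT.
  exact: (lower_crossing_bound hF hX hX0 hst eps0 Dp0 s0 Rd0 hdr Imx0 Tn0 hT).
move=> Dp s Rd Dp0 s0 Rd0 hdr Imx0 x0Ip Tn Tn0 hT.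
exact: (upper_crossing_bound hF hX hX0 hst eps0 Dp0 s0 Rd0 hdr Imx0 x0Ip Tn0 hT).
Qed.
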